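(* Let $m,n$ be natural numbers with $\min\{m,n\}\ge4$, let $\{|e_i\rangle\}_{i=0}^{m-1}$ and $\{|f_j\rangle\}_{j=0}^{n-1}$ be the canonical bases of $\mathbb{C}^m$ and $\mathbb{C}^n$, and let $a\in\mathbb{R}$. Define subspaces of $\mathbb{C}^m\otimes\mathbb{C}^n$: $$\mathcal{T}=\mathrm{span}\{|e_{i-2}\rangle\otimes|f_{j+1}\rangle+(a+1)|e_{i-1}\rangle\otimes|f_j\rangle+(a+1)|e_i\rangle\otimes|f_{j-1}\rangle+|e_{i+1}\rangle\otimes|f_{j-2}\rangle:\ 2\le i\le m-2,\ 2\le j\le n-2\},$$ $$\mathcal{S}=\mathrm{span}\{|e_{i-1}\rangle\otimes|f_{j+1}\rangle+a|e_i\rangle\otimes|f_j\rangle+|e_{i+1}\rangle\otimes|f_{j-1}\rangle:\ 1\le i\le m-2,\ 1\le j\le n-2\}.$$ Then: (1) $\mathcal{T}\subset\mathcal{S}$; (2) if $|a|\ge2$, then $\mathcal{S}$ does not contain any non-zero vector of Schmidt rank $\le2$, and $\dim\mathcal{S}=(m-2)(n-2)$; (3) if $a>4$, then $\mathcal{T}$ does not contain any non-zero vector of Schmidt rank $\le3$, and $\dim\mathcal{T}=(m-3)(n-3)$; (4) if $a>4$, then there is at least one vector of Schmidt rank $3$ in $\mathcal{S}\setminus\mathcal{T}$.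
   Context: The Schmidt rank of $|\psi\rangle=\sum_{i,j}c_{ij}|e_i\rangle\otimes|f_j\rangle\in\mathbb{C}^m\otimes\mathbb{C}^n$ is the minimal number of terms in a decomposition $|\psi\rangle=\sum_{l=1}^r|u_l\rangle\otimes|v_l\rangle$; equivalently, the rank of the matrix $[c_{ij}]$. (The paper presents $\mathcal{T}$ and $\mathcal{S}$ as direct sums over anti-diagonal index $d$ of the spans of generators with $i+j=d+1$, respectively $i+j=d$; these are the same subspaces.) *)

(* C^m (x) C^n is modelled as m x n matrices over R[i]
   (R a real field; for R : realType, R[i] is the complex numbers).
   Subspaces are mxalgebra row spaces of vectorised matrices (mxvec). *)
From HB Require Import structures.
From mathcomp Require Import all_boot all_order all_algebra.
From mathcomp Require Import complex.
Set Implicit Arguments. Unset Strict Implicit. Unset Printing Implicit Defensive.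
Import Order.TTheory GRing.Theory Num.Theory.
Local Open Scope ring_scope.

Section Defs.
Variable R : rcfType.
Local Notation C := R[i].

(* |e_i> (x) |f_j>, with natural-number indices (zero if out of range) *)
Definition ebasis (m n i j : nat) : 'M[C]_(m, n) :=
  \matrix_(p < m, q < n) ((p == i :> nat) && (q == j :> nat))%:R.

Definition Tgen (m n : nat) (a : R) (i j : nat) : 'M[C]_(m, n) :=
  ebasis m n (i - 2) (j + 1) + (a + 1)%:C%C *: ebasis m n (i - 1) j
  + (a + 1)%:C%C *: ebasis m n i (j - 1) + ebasis m n (i + 1) (j - 2).

Definition Sgen (m n : nat) (a : R) (i j : nat) : 'M[C]_(m, n) :=
  ebasis m n (i - 1) (j + 1) + a%:C%C *: ebasis m n i j + ebasis m n (i + 1) (j - 1).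

Definition Tspace (m n : nat) (a : R) : 'M[C]_(m * n) :=
  (\sum_(2 <= i < m - 1) \sum_(2 <= j < n - 1) <<mxvec (Tgen m n a i j)>>)%MS.

Definition Sspace (m n : nat) (a : R) : 'M[C]_(m * n) :=
  (\sum_(1 <= i < m - 1) \sum_(1 <= j < n - 1) <<mxvec (Sgen m n a i j)>>)%MS.

Definition in_space (m n : nat) (v : 'M[C]_(m, n)) (U : 'M[C]_(m * n)) : bool :=
  (mxvec v <= U)%MS.

Definition schmidt_rank (m n : nat) (v : 'M[C]_(m, n)) : nat := \rank v.

Definition dimsp (k : nat) (U : 'M[C]_k) : nat := \rank U.
End Defs.

(* Pair a matrix v with the functional that weights the entries of the antidiagonal
   i + j = d by w i.  It vanishes on S (resp. T) as soon as w solves the recurrence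
   w_i + a w_(i+1) + w_(i+2) = 0 (resp. the one with characteristic polynomial
   (x + 1)(x^2 + a x + 1)), e.g. for w i = r^i with r a characteristic root.  On the
   lowest nonzero antidiagonal of v this gives a vanishing combination of the sequences
   r^i whose coefficients are the nonzero entries of that antidiagonal.  The roots are
   real with distinct absolute values (and negative for T), so such a combination needs
   at least three (resp. four) terms: two terms are excluded by a Vandermonde argument
   (using i r^i for the double root when |a| = 2), three terms by Rolle's theorem.  The
   nonzero entries of the lowest antidiagonal form the diagonal of a triangular square
   submatrix of v, which bounds its rank from below.
   For the dimensions, every e_p (x) f_q lies in S (resp. T) plus the span of the first
   2 (resp. 3) rows and the last 2 (resp. 3) columns, by induction on p using the
   generator whose last term is e_p (x) f_q. *)

From HB Require Import structures.
From mathcomp Require Import all_boot all_order all_algebra.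
From mathcomp Require Import complex polyrcf reals.
From mathcomp Require Import zify ring lra.
Import Order.TTheory GRing.Theory Num.Theory.
Local Open Scope ring_scope.

Section GridSpan.
Context {F : fieldType} {m n : nat}.
Implicit Types (G : nat -> nat -> 'M[F]_(m, n)).

Definition span_grid G i0 i1 j0 j1 : 'M[F]_(m * n) :=
  (\sum_(i0 <= i < i1) \sum_(j0 <= j < j1) <<mxvec (G i j)>>)%MS.

Lemma span_grid_sup G i0 i1 j0 j1 i j :
  (i0 <= i < i1)%N -> (j0 <= j < j1)%N -> (mxvec (G i j) <= span_grid G i0 i1 j0 j1)%MS.
Proof.
move=> hi hj; rewrite /span_grid (big_rem i) ?mem_index_iota //=.
apply: submx_trans (addsmxSl _ _); rewrite (big_rem j) ?mem_index_iota //=.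
by apply: submx_trans (addsmxSl _ _); rewrite genmxE.
Qed.

Lemma span_grid_sub G i0 i1 j0 j1 p (X : 'M[F]_(p, m * n)) :
  (forall i j, (i0 <= i < i1)%N -> (j0 <= j < j1)%N -> (mxvec (G i j) <= X)%MS) ->
  (span_grid G i0 i1 j0 j1 <= X)%MS.
Proof.
move=> sGX; rewrite /span_grid big_seq_cond.
elim/big_rec: _ => [|i Y /andP[hi _] sYX]; first exact: sub0mx.
rewrite addsmx_sub sYX andbT big_seq_cond.
elim/big_rec: _ => [|j Z /andP[hj _] sZX]; first exact: sub0mx.
by rewrite addsmx_sub sZX genmxE sGX -?mem_index_iota.
Qed.

Lemma mxrank_span_grid G i0 i1 j0 j1 :
  (\rank (span_grid G i0 i1 j0 j1) <= (i1 - i0) * (j1 - j0))%N.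
Proof.
rewrite /span_grid /index_iota -{2}(size_iota i0 (i1 - i0)) -{2}(size_iota j0 (j1 - j0)).
elim: (iota i0 _) => [|i r IHr]; first by rewrite big_nil mxrank0.
rewrite big_cons /= mulSn; apply: leq_trans (mxrank_adds_leqif _ _) _.
apply: leq_add IHr.
elim: (iota j0 _) => [|j s IHs]; first by rewrite big_nil mxrank0.
rewrite big_cons /=; apply: leq_trans (mxrank_adds_leqif _ _) _.
by rewrite mxrank_gen (leq_add (rank_leq_row _) IHs).
Qed.

End GridSpan.

Section Pairing.
Context {F : fieldType} {m n : nat}.
Implicit Types (u v : 'M[F]_(m, n)).

Definition mxdot u v : F := \sum_i \sum_j u i j * v i j.

Lemma mxdot_mxvec u v : mxdot u v = (mxvec u *m (mxvec v)^T) 0 0.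
Proof.
rewrite !mxE (reindex _ (curry_mxvec_bij _ _)) /= /mxdot pair_bigA /=.
by apply: eq_bigr => -[i j] _; rewrite !mxE !mxvecE.
Qed.

Lemma mxdotDl u1 u2 v : mxdot (u1 + u2) v = mxdot u1 v + mxdot u2 v.
Proof.
rewrite /mxdot -big_split; apply: eq_bigr => i _ /=.
by rewrite -big_split; apply: eq_bigr => j _; rewrite mxE mulrDl.
Qed.

Lemma mxdotZl c u v : mxdot (c *: u) v = c * mxdot u v.
Proof.
rewrite /mxdot mulr_sumr; apply: eq_bigr => i _.
by rewrite mulr_sumr; apply: eq_bigr => j _; rewrite mxE mulrA.
Qed.

Lemma mxdot_deltal i0 j0 v : mxdot (delta_mx i0 j0) v = v i0 j0.
Proof.
rewrite /mxdot (bigD1 i0) //= (bigD1 j0) //= mxE !eqxx mul1r big1 ?addr0.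
  by rewrite big1 ?addr0 // => i /negbTE ni; rewrite big1 // => j _; rewrite mxE ni mul0r.
by move=> j /negbTE nj; rewrite mxE nj andbF mul0r.
Qed.

Lemma mxdot_span_grid_eq0 G i0 i1 j0 j1 v P :
  (forall i j, (i0 <= i < i1)%N -> (j0 <= j < j1)%N -> mxdot (G i j) P = 0) ->
  (mxvec v <= span_grid G i0 i1 j0 j1)%MS -> mxdot v P = 0.
Proof.
move=> GP0 vG; have GP : (span_grid G i0 i1 j0 j1 <= kermx (mxvec P)^T)%MS.
  apply: span_grid_sub => i j hi hj; apply/sub_kermxP/matrixP => x y.
  by rewrite !ord1 -mxdot_mxvec GP0 // mxE.
have /sub_kermxP/matrixP/(_ 0 0) := submx_trans vG GP.
by rewrite -mxdot_mxvec mxE.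
Qed.

End Pairing.

(** * Rank bounds from the lowest antidiagonal *)

Section Antidiagonals.
Context {F : fieldType} {m n : nat}.
Implicit Types (v : 'M[F]_(m, n)) (d : nat) (w : nat -> F) (i : 'I_m) (j : 'I_n).

Definition antidiag v d (i : 'I_m) : F := \sum_(j < n | (i + j == d)%N) v i j.

Definition antidiag_mx d w : 'M[F]_(m, n) :=
  \matrix_(i, j) ((i + j == d)%N%:R * w i).

Lemma mxdot_antidiag_mx v d w :
  mxdot v (antidiag_mx d w) = \sum_i antidiag v d i * w i.
Proof.
rewrite /mxdot; apply: eq_bigr => i _; rewrite /antidiag mulr_suml [RHS]big_mkcond.
by apply: eq_bigr => j _; rewrite mxE; case: (_ == d); rewrite ?mul1r ?mul0r ?mulr0.
Qed.

Lemma antidiagE v d i j : (i + j)%N = d -> antidiag v d i = v i j.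
Proof.
move=> ijd; rewrite /antidiag (bigD1 j) /=; last by rewrite ijd.
by rewrite big1 ?addr0 // => j' /andP[/eqP ij'd /eqP]; case; apply: val_inj => /=; lia.
Qed.

Lemma antidiag_neq0 v d i : antidiag v d i != 0 -> exists j, (i + j)%N = d.
Proof.
case: (pickP (fun j : 'I_n => (i + j == d)%N)) => [j /eqP | none]; first by exists j.
by rewrite /antidiag big_pred0 ?eqxx.
Qed.

Lemma exists_lowest_antidiag v : v != 0 ->
  exists d, (forall i j, (i + j < d)%N -> v i j = 0) /\ exists i, antidiag v d i != 0.
Proof.
move=> v_neq0; pose P d := [exists i : 'I_m, exists j : 'I_n, (i + j == d)%N && (v i j != 0)].
have [|d Pd d_min] := @ex_minnP P.
  case: (pickP (fun ij : 'I_m * 'I_n => v ij.1 ij.2 != 0)) => [[i j] vij | v0].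
    by exists (i + j)%N; apply/existsP; exists i; apply/existsP; exists j; rewrite eqxx.
  by case/eqP: v_neq0; apply/matrixP => i j; rewrite mxE; apply/eqP/negbFE/(v0 (i, j)).
exists d; split=> [i j ltd | ].
  apply/eqP; apply: contraTT ltd => vij; rewrite -leqNgt; apply: d_min.
  by apply/existsP; exists i; apply/existsP; exists j; rewrite eqxx.
case/existsP: Pd => i /existsP[j /andP[/eqP ijd vij]].
by exists i; rewrite (antidiagE _ _ _ _ ijd).
Qed.

End Antidiagonals.

Lemma mxrank_mxsub {F : fieldType} {m n m' n'} (f : 'I_m' -> 'I_m) (g : 'I_n' -> 'I_n)
    (A : 'M[F]_(m, n)) :
  (\rank (mxsub f g A) <= \rank A)%N.
Proof.
rewrite mxsubrc rowsubE; apply: leq_trans (mxrankM_maxr _ _) _.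
by rewrite -[A]mulmx1 -mulmx_colsub mulmx1 mxrankM_maxl.
Qed.

Lemma mxrank_ge_trig_mxsub {F : fieldType} {m n k} (f : 'I_k -> 'I_m) (g : 'I_k -> 'I_n)
    (A : 'M[F]_(m, n)) :
  is_trig_mx (mxsub f g A) -> (forall x, A (f x) (g x) != 0) -> (k <= \rank A)%N.
Proof.
move=> trigA diagA; apply: leq_trans (mxrank_mxsub f g A).
rewrite mxrank_unit // unitmxE unitfE det_trig //.
by apply/prodf_neq0 => x _; rewrite mxE.
Qed.

Lemma enum_val_ord_homo {m} {A : {pred 'I_m}} : {homo @enum_val _ A : x y / (x < y)%N}.
Proof.
move=> x y xy; have i0 := enum_val x; rewrite !(enum_val_nth i0).
have ltn_tr : transitive (relpre (@nat_of_ord m) ltn) by move=> ? ? ?; apply: ltn_trans.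
have sortedA : sorted (relpre (@nat_of_ord m) ltn) (enum A).
  apply: (sorted_filter ltn_tr (mem A) (_ : sorted _ (Finite.enum _))).
  by rewrite -enumT -sorted_map val_enum_ord iota_ltn_sorted.
by apply: (sorted_ltn_nth ltn_tr i0 sortedA); rewrite // inE -cardE.
Qed.

Definition sparse_separating {R : pzSemiRingType} (W : (nat -> R) -> Prop) (K : nat) :=
  forall k (e : 'I_k -> nat) (c : 'I_k -> R), (0 < k)%N -> {homo e : x y / (x < y)%N} ->
    (forall x, c x != 0) -> (forall w, W w -> \sum_(x < k) c x * w (e x) = 0) -> (K <= k)%N.

Lemma sparse_separatingS {R : pzSemiRingType} (W : (nat -> R) -> Prop) K :
  sparse_separating W K ->
  (forall (e : 'I_K -> nat) (c : 'I_K -> R), {homo e : x y / (x < y)%N} ->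
     (forall x, c x != 0) -> (forall w, W w -> \sum_(x < K) c x * w (e x) = 0) -> False) ->
  sparse_separating W K.+1.
Proof.
move=> sepW noK k e c k_gt0 e_homo c_neq0 Wc_eq0; case: (ltngtP K k) => // [ltkK | eqKk].
  by have := sepW k e c k_gt0 e_homo c_neq0 Wc_eq0; rewrite leqNgt ltkK.
by subst k; case: (noK e c e_homo c_neq0 Wc_eq0).
Qed.

Section AntidiagonalRank.
Context {F : fieldType} {m n : nat}.
Implicit Types (v : 'M[F]_(m, n)) (d : nat).

Definition antidiag_support v d : {set 'I_m} := [set i | antidiag v d i != 0].

Lemma mxrank_ge_antidiag_support v d :
  (forall (i : 'I_m) (j : 'I_n), (i + j < d)%N -> v i j = 0) ->
  (#|antidiag_support v d| <= \rank v)%N.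
Proof.
set A := antidiag_support v d; move=> v_low.
have nzA x : antidiag v d (@enum_val _ A x) != 0 by have := enum_valP x; rewrite inE.
have [g gP] := @fin_all_exists _ (fun=> 'I_n)
  (fun x j => (@enum_val _ A x + j)%N = d) (fun x => antidiag_neq0 _ _ _ (nzA x)).
apply: (mxrank_ge_trig_mxsub (@enum_val _ A) g).
  apply/is_trig_mxP => x y xy; rewrite mxE v_low //.
  by rewrite -(gP y) ltn_add2r; apply: enum_val_ord_homo.
by move=> x; rewrite -(antidiagE _ _ _ _ (gP x)).
Qed.

Lemma mxrank_ge_sparse_separating {W K v} :
  sparse_separating W K -> v != 0 ->
  (forall d w, W w -> mxdot v (antidiag_mx d w) = 0) -> (K <= \rank v)%N.
Proof.
move=> sepW /exists_lowest_antidiag[d [v_low [i0 vi0]]] vW.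
apply: leq_trans (mxrank_ge_antidiag_support _ _ v_low).
set A := antidiag_support v d.
have nzA x : antidiag v d (@enum_val _ A x) != 0 by have := enum_valP x; rewrite inE.
apply: (sepW _ (fun x => @enum_val _ A x : nat) (fun x => antidiag v d (enum_val x))) => //.
- by apply/card_gt0P; exists i0; rewrite inE.
- exact: enum_val_ord_homo.
move=> w Ww; rewrite -[RHS](vW d w Ww) mxdot_antidiag_mx.
rewrite -(big_enum_val (fun i => antidiag v d i * w i)).
rewrite [RHS](bigID (mem A)) /= [X in _ + X]big1 ?addr0 // => i; rewrite inE => /negbNE/eqP->.
by rewrite mul0r.
Qed.

End AntidiagonalRank.

(** * Vanishing lacunary sums *)

Section Lacunary.
Context {F : idomainType}.
Implicit Type W : (nat -> F) -> Prop.

Definition geom (x : F) : nat -> F := fun i => x ^+ i.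
Definition dgeom (x : F) : nat -> F := fun i => i%:R * x ^+ i.

Lemma two_term_eq0 {c0 c1 x y : F} {e0 e1 : nat} : (e0 < e1)%N -> x != 0 -> y != 0 ->
  x ^+ (e1 - e0) != y ^+ (e1 - e0) ->
  c0 * x ^+ e0 + c1 * x ^+ e1 = 0 -> c0 * y ^+ e0 + c1 * y ^+ e1 = 0 -> c0 = 0 /\ c1 = 0.
Proof.
move=> e01 x0 y0; move: (e1 - e0)%N (subnKC (ltnW e01)) => p <- xy_p.
have factor t : c0 * t ^+ e0 + c1 * t ^+ (e0 + p) = (c0 + c1 * t ^+ p) * t ^+ e0.
  by rewrite exprD; ring.
rewrite !factor => /eqP; rewrite mulf_eq0 expf_eq0 (negbTE x0) andbF orbF => /eqP Ex.
move=> /eqP; rewrite mulf_eq0 expf_eq0 (negbTE y0) andbF orbF => /eqP Ey.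
have /eqP : c1 * (x ^+ p - y ^+ p) = 0.
  by rewrite mulrBr -[c1 * x ^+ p](addKr c0) Ex -[c1 * y ^+ p](addKr c0) Ey subrr.
rewrite mulf_eq0 subr_eq0 (negbTE xy_p) orbF => /eqP c1_0.
by split=> //; move: Ex; rewrite c1_0 mul0r addr0.
Qed.

Lemma sparse_separating_geom1 {W} {x : F} : x != 0 -> W (geom x) -> sparse_separating W 2.
Proof.
move=> x0 Wx [|[|k]] // e c _ _ c_neq0 Wc_eq0.
have := Wc_eq0 _ Wx; rewrite big_ord1 => /eqP; rewrite mulf_eq0 expf_eq0 (negbTE x0) andbF.
by rewrite orbF (negbTE (c_neq0 _)).
Qed.

Lemma sparse_separating_geom2 {W} {x y : F} :
  x != 0 -> y != 0 -> (forall p, (0 < p)%N -> x ^+ p != y ^+ p) ->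
  W (geom x) -> W (geom y) -> sparse_separating W 3.
Proof.
move=> x0 y0 xy Wx Wy; apply: sparse_separatingS (sparse_separating_geom1 x0 Wx) _.
move=> e c e_homo c_neq0 Wc_eq0; have e01 : (e ord0 < e (lift ord0 ord0))%N by apply: e_homo.
have := Wc_eq0 _ Wx; have := Wc_eq0 _ Wy; rewrite !big_ord_recl !big_ord0 !addr0 => Ey Ex.
have /xy xy01 : (0 < e (lift ord0 ord0) - e ord0)%N by rewrite subn_gt0.
have [c0 _] := two_term_eq0 e01 x0 y0 xy01 Ex Ey.
by have := c_neq0 ord0; rewrite c0 eqxx.
Qed.

End Lacunary.

Section LacunaryCharZero.
Context {F : numDomainType}.
Implicit Type W : (nat -> F) -> Prop.

Lemma two_term_deriv_eq0 {c0 c1 x : F} {e0 e1 : nat} : (e0 < e1)%N -> x != 0 ->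
  c0 * x ^+ e0 + c1 * x ^+ e1 = 0 -> c0 * dgeom x e0 + c1 * dgeom x e1 = 0 ->
  c0 = 0 /\ c1 = 0.
Proof.
move=> e01 x0 E0 E1.
have /eqP : (e1%:R - e0%:R) * (c1 * x ^+ e1) = 0.
  transitivity (c0 * dgeom x e0 + c1 * dgeom x e1 - e0%:R * (c0 * x ^+ e0 + c1 * x ^+ e1)).
    by rewrite /dgeom; ring.
  by rewrite E0 E1 mulr0 subrr.
rewrite -natrB ?(ltnW e01) // !mulf_eq0 pnatr_eq0 subn_eq0 leqNgt e01 /=.
rewrite expf_eq0 (negbTE x0) andbF orbF.
move=> /eqP c1_0; split=> //; move: E0; rewrite c1_0 mul0r addr0 => /eqP.
by rewrite mulf_eq0 expf_eq0 (negbTE x0) andbF orbF => /eqP.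
Qed.

Lemma sparse_separating_geom_dgeom {W} {x : F} :
  x != 0 -> W (geom x) -> W (dgeom x) -> sparse_separating W 3.
Proof.
move=> x0 Wx Wdx; apply: sparse_separatingS (sparse_separating_geom1 x0 Wx) _.
move=> e c e_homo c_neq0 Wc_eq0; have e01 : (e ord0 < e (lift ord0 ord0))%N by apply: e_homo.
have := Wc_eq0 _ Wx; have := Wc_eq0 _ Wdx; rewrite !big_ord_recl !big_ord0 !addr0 => Edx Ex.
have [c0 _] := two_term_deriv_eq0 e01 x0 Ex Edx.
by have := c_neq0 ord0; rewrite c0 eqxx.
Qed.

End LacunaryCharZero.

Section ThreeTerms.
Context {R : rcfType}.

Lemma trinomial_pos_eq0 {b0 b1 b2 : R} {e0 e1 e2 : nat} {s1 s2 s3 : R} :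
  (e0 < e1 < e2)%N -> 0 < s1 -> s1 < s2 -> s2 < s3 ->
  (forall s, s \in [:: s1; s2; s3] -> b0 * s ^+ e0 + b1 * s ^+ e1 + b2 * s ^+ e2 = 0) ->
  [/\ b0 = 0, b1 = 0 & b2 = 0].
Proof.
move=> /andP[e01 e12] s1_gt0 s12 s23 Es.
have s2_gt0 := lt_trans s1_gt0 s12; have s3_gt0 := lt_trans s2_gt0 s23.
move: (e1 - e0)%N (e2 - e0)%N (subnKC (ltnW e01)) (subnKC (ltnW (ltn_trans e01 e12))) => p q.
move=> e1E e2E; subst e1 e2; rewrite ltn_add2l in e12; rewrite -{1}[e0]addn0 ltn_add2l in e01.
have {}Es s : s \in [:: s1; s2; s3] -> b0 + b1 * s ^+ p + b2 * s ^+ q = 0.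
  move=> s_in; have s_gt0 : 0 < s by move: s_in; rewrite !inE => /or3P[] /eqP->.
  have := Es s s_in; rewrite (_ : _ + _ = (b0 + b1 * s ^+ p + b2 * s ^+ q) * s ^+ e0).
    by move=> /eqP; rewrite mulf_eq0 expf_eq0 (gt_eqF s_gt0) andbF orbF => /eqP.
  by rewrite !exprD; ring.
pose phi : {poly R} := b0%:P + b1 *: 'X^p + b2 *: 'X^q.
have phiE s : phi.[s] = b0 + b1 * s ^+ p + b2 * s ^+ q by rewrite /phi !hornerE.
have phi'E t : phi^`().[t] = b1 *+ p * t ^+ p.-1 + b2 *+ q * t ^+ q.-1.
  by rewrite /phi !derivE !hornerE !hornerMn !hornerXn; ring.
have [r1 r2 r3] : [/\ phi.[s1] = 0, phi.[s2] = 0 & phi.[s3] = 0].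
  by split; rewrite phiE Es // !inE eqxx ?orbT.
have [t1 /[!in_itv]/andP[s1t1 t1s2] d1] := poly_rolle s12 (etrans r1 (esym r2)).
have [t2 /[!in_itv]/andP[s2t2 t2s3] d2] := poly_rolle s23 (etrans r2 (esym r3)).
have t1_gt0 := lt_trans s1_gt0 s1t1; have t12 := lt_trans t1s2 s2t2.
have t2_gt0 := lt_trans t1_gt0 t12.
have pq : (p.-1 < q.-1)%N by move: e01 e12; clear; lia.
have t12_pow : t1 ^+ (q.-1 - p.-1) != t2 ^+ (q.-1 - p.-1).
  by rewrite lt_eqF // ltrXn2r ?(ltW t1_gt0) // subn_eq0 -ltnNge.
rewrite phi'E in d1; rewrite phi'E in d2.
have [/eqP b1p /eqP b2q] := two_term_eq0 pq (lt0r_neq0 t1_gt0) (lt0r_neq0 t2_gt0) t12_pow d1 d2.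
move: b1p b2q; rewrite !mulrn_eq0 !eqn0Ngt e01 (ltn_trans e01 e12) /= => /eqP b1_0 /eqP b2_0.
by split=> //; move: r1; rewrite phiE b1_0 b2_0 !mul0r !addr0.
Qed.

Lemma Re_mul_real (c : R[i]) (r : R) : complex.Re (c * r%:C%C) = complex.Re c * r.
Proof. by case: c => a b /=; rewrite mulr0 subr0. Qed.

Lemma Im_mul_real (c : R[i]) (r : R) : complex.Im (c * r%:C%C) = complex.Im c * r.
Proof. by case: c => a b /=; rewrite mulr0 add0r. Qed.

Lemma trinomial_neg_eq0 {c0 c1 c2 : R[i]} {e0 e1 e2 : nat} {x y z : R} :
  (e0 < e1 < e2)%N -> x < y -> y < z -> z < 0 ->
  (forall t, t \in [:: x; y; z] ->
     c0 * t%:C%C ^+ e0 + c1 * t%:C%C ^+ e1 + c2 * t%:C%C ^+ e2 = 0) ->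
  [/\ c0 = 0, c1 = 0 & c2 = 0].
Proof.
move=> e012 xy yz z_lt0 Ec.
have [nz_gt0 nzy nyx] : [/\ 0 < - z, - z < - y & - y < - x] by rewrite oppr_gt0 !ltrN2.
have sgn_neq0 e : (-1 : R) ^+ e != 0 by rewrite expf_neq0 // oppr_eq0 oner_eq0.
(* Real and imaginary parts satisfy the real statement at the points -z < -y < -x. *)
have real_part (f : {additive R[i] -> R}) : (forall c r, f (c * r%:C%C) = f c * r) ->
    [/\ f c0 = 0, f c1 = 0 & f c2 = 0].
  move=> fM; have [] := trinomial_pos_eq0 (b0 := f c0 * (-1) ^+ e0) (b1 := f c1 * (-1) ^+ e1)
    (b2 := f c2 * (-1) ^+ e2) e012 nz_gt0 nzy nyx.
    move=> s s_in; have /Ec/(congr1 f) : - s \in [:: x; y; z].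
      by move: s_in; rewrite !inE => /or3P[]/eqP->; rewrite opprK eqxx ?orbT.
    rewrite !raddfD /= -!rmorphXn !fM raddf0 !(exprNn s) => <-; ring.
  move=> /eqP + /eqP + /eqP; rewrite !mulf_eq0 !(negbTE (sgn_neq0 _)) !orbF.
  by move=> /eqP-> /eqP-> /eqP->.
have [Re0 Re1 Re2] := real_part (@complex.Re R) Re_mul_real.
have [Im0 Im1 Im2] := real_part (@complex.Im R) Im_mul_real.
have eq0 c : complex.Re c = 0 -> complex.Im c = 0 -> c = 0 by case: c => a b /= -> ->.
by split; apply: eq0.
Qed.

End ThreeTerms.

Lemma sparse_separating_geom3 {R : rcfType} {W : (nat -> R[i]) -> Prop} {x y z : R} :
  sparse_separating W 3 -> x < y -> y < z -> z < 0 ->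
  W (geom x%:C%C) -> W (geom y%:C%C) -> W (geom z%:C%C) -> sparse_separating W 4.
Proof.
move=> sepW xy yz z_lt0 Wx Wy Wz; apply: sparse_separatingS sepW _ => e c e_homo c_neq0 Wc_eq0.
have e012 : (e ord0 < e (lift ord0 ord0) < e (lift ord0 (lift ord0 ord0)))%N.
  by rewrite !e_homo.
have [c0 _ _] : [/\ c ord0 = 0, c (lift ord0 ord0) = 0 & c (lift ord0 (lift ord0 ord0)) = 0].
  apply: trinomial_neg_eq0 e012 xy yz z_lt0 _ => t; rewrite !inE => /or3P[]/eqP->.
  - by move: (Wc_eq0 _ Wx); rewrite !big_ord_recl big_ord0 addr0 addrA.
  - by move: (Wc_eq0 _ Wy); rewrite !big_ord_recl big_ord0 addr0 addrA.
  - by move: (Wc_eq0 _ Wz); rewrite !big_ord_recl big_ord0 addr0 addrA.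
by have := c_neq0 ord0; rewrite c0 eqxx.
Qed.

Section Generators.
Context {R : rcfType} {m n : nat}.
Local Notation C := R[i].
Local Notation e := (ebasis R m n).
Implicit Type a : R.

Lemma SspaceE a : Sspace m n a = span_grid (Sgen m n a) 1 (m - 1) 1 (n - 1).
Proof. by []. Qed.

Lemma TspaceE a : Tspace m n a = span_grid (Tgen m n a) 2 (m - 1) 2 (n - 1).
Proof. by []. Qed.

Lemma Tgen_split a i j : (2 <= i)%N -> (1 <= j)%N ->
  Tgen m n a i j = Sgen m n a (i - 1) j + Sgen m n a i (j - 1).
Proof.
move=> i_ge2 j_ge1; rewrite /Tgen /Sgen rmorphD rmorph1.
have -> : (i - 1 - 1 = i - 2)%N by lia.
have -> : (i - 1 + 1 = i)%N by lia.
have -> : (j - 1 + 1 = j)%N by lia.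
have -> : (j - 1 - 1 = j - 2)%N by lia.
by apply/matrixP => x y; rewrite !mxE; ring.
Qed.

Lemma Tspace_sub_Sspace a : (Tspace m n a <= Sspace m n a)%MS.
Proof.
rewrite TspaceE SspaceE; apply: span_grid_sub => i j /andP[i_ge2 i_lt] /andP[j_ge2 j_lt].
rewrite Tgen_split 1?linearD; try lia.
by apply: addmx_sub; apply: span_grid_sup; lia.
Qed.

Lemma ebasis_delta {p q} (p_lt : (p < m)%N) (q_lt : (q < n)%N) :
  e p q = delta_mx (Ordinal p_lt) (Ordinal q_lt).
Proof. by apply/matrixP => i j; rewrite !mxE. Qed.

Lemma mxdot_ebasis_antidiag p q d w : (p < m)%N -> (q < n)%N ->
  mxdot (e p q) (antidiag_mx d w) = (p + q == d)%N%:R * w p.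
Proof. by move=> p_lt q_lt; rewrite (ebasis_delta p_lt q_lt) mxdot_deltal mxE. Qed.

Definition Srec a (w : nat -> C) := forall i, w i + a%:C%C * w i.+1 + w i.+2 = 0.

Definition Trec a (w : nat -> C) :=
  forall i, w i + (a + 1)%:C%C * w i.+1 + (a + 1)%:C%C * w i.+2 + w i.+3 = 0.

Lemma mxdot_Sgen_antidiag a i j d w :
  (0 < i)%N -> (i < m - 1)%N -> (0 < j)%N -> (j < n - 1)%N ->
  mxdot (Sgen m n a i j) (antidiag_mx d w) =
    (i + j == d)%N%:R * (w (i - 1)%N + a%:C%C * w i + w (i + 1)%N).
Proof.
move=> i_gt0 i_lt j_gt0 j_lt.
rewrite /Sgen !mxdotDl mxdotZl !mxdot_ebasis_antidiag; try lia.
have -> : (i - 1 + (j + 1) = i + j)%N by lia.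
have -> : (i + 1 + (j - 1) = i + j)%N by lia.
by ring.
Qed.

Lemma mxdot_Tgen_antidiag a i j d w :
  (1 < i)%N -> (i < m - 1)%N -> (1 < j)%N -> (j < n - 1)%N ->
  mxdot (Tgen m n a i j) (antidiag_mx d w) = (i + j - 1 == d)%N%:R *
    (w (i - 2)%N + (a + 1)%:C%C * w (i - 1)%N + (a + 1)%:C%C * w i + w (i + 1)%N).
Proof.
move=> i_gt1 i_lt j_gt1 j_lt.
rewrite /Tgen !mxdotDl !mxdotZl !mxdot_ebasis_antidiag; try lia.
have -> : (i - 2 + (j + 1) = i + j - 1)%N by lia.
have -> : (i - 1 + j = i + j - 1)%N by lia.
have -> : (i + (j - 1) = i + j - 1)%N by lia.
have -> : (i + 1 + (j - 2) = i + j - 1)%N by lia.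
by ring.
Qed.

Lemma Sspace_antidiag_orth {a w v d} :
  Srec a w -> in_space v (Sspace m n a) -> mxdot v (antidiag_mx d w) = 0.
Proof.
rewrite /in_space SspaceE => Sw; apply: mxdot_span_grid_eq0.
move=> i j /andP[i_gt0 i_lt] /andP[j_gt0 j_lt].
rewrite mxdot_Sgen_antidiag // -[w i](congr1 w (_ : (i - 1).+1 = i)%N); last by lia.
by rewrite -[(i + 1)%N](_ : (i - 1).+2 = i + 1)%N ?Sw ?mulr0 //; lia.
Qed.

Lemma Tspace_antidiag_orth {a w v d} :
  Trec a w -> in_space v (Tspace m n a) -> mxdot v (antidiag_mx d w) = 0.
Proof.
rewrite /in_space TspaceE => Tw; apply: mxdot_span_grid_eq0.
move=> i j /andP[i_gt1 i_lt] /andP[j_gt1 j_lt].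
rewrite mxdot_Tgen_antidiag // -[w (i - 1)%N](congr1 w (_ : (i - 2).+1 = i - 1)%N); last by lia.
rewrite -[w i](congr1 w (_ : (i - 2).+2 = i)%N); last by lia.
by rewrite -[(i + 1)%N](_ : (i - 2).+3 = i + 1)%N ?Tw ?mulr0 //; lia.
Qed.

Lemma Tspace_antidiag_lt3 {a w v d} :
  (d < 3)%N -> in_space v (Tspace m n a) -> mxdot v (antidiag_mx d w) = 0.
Proof.
rewrite /in_space TspaceE => d_lt3; apply: mxdot_span_grid_eq0.
move=> i j /andP[i_gt1 i_lt] /andP[j_gt1 j_lt]; rewrite mxdot_Tgen_antidiag //.
by rewrite (_ : (i + j - 1 == d)%N = false) ?mul0r //; apply/negbTE/eqP; lia.
Qed.

End Generators.

Section Recurrences.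
Context {R : rcfType}.
Implicit Types a r : R.

Lemma Srec_geom {a r} : r ^+ 2 + a * r + 1 = 0 -> Srec a (geom r%:C%C).
Proof.
move=> root i; transitivity ((r ^+ i * (r ^+ 2 + a * r + 1))%:C%C).
  by rewrite /geom !(rmorphM, rmorphD, rmorphXn, rmorph1) !exprS; ring.
by rewrite root mulr0 rmorph0.
Qed.

Lemma Srec_dgeom {a r} : a + 2 * r = 0 -> r ^+ 2 + a * r + 1 = 0 -> Srec a (dgeom r%:C%C).
Proof.
move=> double root i; transitivity
  ((i%:R * r ^+ i * (r ^+ 2 + a * r + 1) + r ^+ i.+1 * (a + 2 * r))%:C%C).
  by rewrite /dgeom !(rmorphM, rmorphD, rmorphXn, rmorph1, rmorph_nat) !mulrSr !exprS; ring.
by rewrite root double !mulr0 addr0 rmorph0.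
Qed.

Lemma Trec_geom {a r} : (r + 1) * (r ^+ 2 + a * r + 1) = 0 -> Trec a (geom r%:C%C).
Proof.
move=> root i; transitivity ((r ^+ i * ((r + 1) * (r ^+ 2 + a * r + 1)))%:C%C).
  by rewrite /geom !(rmorphM, rmorphD, rmorphXn, rmorph1) !exprS; ring.
by rewrite root mulr0 rmorph0.
Qed.

Lemma quadratic_real_roots a : 2 < `|a| ->
  exists r1 r2, [/\ r1 < r2, r1 * r2 = 1 & r1 + r2 = - a].
Proof.
move=> a_gt2; have a2_gt4 : 4 < a ^+ 2 by rewrite -real_normK ?num_real //; nra.
have s2 : Num.sqrt (a ^+ 2 - 4) ^+ 2 = a ^+ 2 - 4 by rewrite sqr_sqrtr // subr_ge0 ltW.
have s_gt0 : 0 < Num.sqrt (a ^+ 2 - 4) by rewrite sqrtr_gt0 subr_gt0.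
by exists ((- a - Num.sqrt (a ^+ 2 - 4)) / 2), ((- a + Num.sqrt (a ^+ 2 - 4)) / 2); split; nra.
Qed.

Lemma vieta_root {a r1 r2 r} : r1 * r2 = 1 -> r1 + r2 = - a -> r \in [:: r1; r2] ->
  r ^+ 2 + a * r + 1 = 0.
Proof.
move=> prod sum; rewrite -[a]opprK -sum -prod !inE => /orP[]/eqP->; ring.
Qed.

Lemma real_complex_expn_neq (x y : R) p : (0 < p)%N -> `|x| != `|y| ->
  x%:C%C ^+ p != y%:C%C ^+ p.
Proof.
move=> p_gt0; apply: contra; rewrite -!rmorphXn (inj_eq (fmorph_inj _)) => /eqP/(congr1 Num.norm).
by rewrite !normrX => /eqP; rewrite eqrXn2.
Qed.

Lemma sparse_separating_Srec {a} : 2 <= `|a| -> sparse_separating (Srec a) 3.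
Proof.
rewrite le_eqVlt => /orP[/eqP a2 | /quadratic_real_roots[r1 [r2 [r12 prod sum]]]].
  have a2_eq4 : a ^+ 2 = 4 by rewrite -real_normK ?num_real // -a2; ring.
  have root : (- a / 2) ^+ 2 + a * (- a / 2) + 1 = 0 by nra.
  have r_neq0 : (- a / 2)%:C%C != 0 by rewrite fmorph_eq0; apply/eqP => r0; nra.
  by apply: sparse_separating_geom_dgeom r_neq0 (Srec_geom root) (Srec_dgeom _ root) => //; nra.
have r_neq0 r : r \in [:: r1; r2] -> r%:C%C != 0.
  rewrite fmorph_eq0 !inE => /orP[]/eqP-> ; apply/eqP => r0; move: prod;
  by rewrite r0 ?mul0r ?mulr0 => /esym/eqP; rewrite oner_eq0.
have norm12 : `|r1| != `|r2|.
  apply/eqP => /(congr1 (fun x => x ^+ 2)); rewrite !real_normK ?num_real // => /eqP.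
  rewrite -subr_eq0 subr_sqr mulf_eq0 subr_eq0 (lt_eqF r12) addr_eq0 => /eqP r1E.
  by move: prod; rewrite r1E; nra.
apply: sparse_separating_geom2 (r_neq0 r1 _) (r_neq0 r2 _) _ _ _; rewrite ?inE ?eqxx ?orbT //.
- by move=> p p_gt0; apply: real_complex_expn_neq.
- by apply: Srec_geom; apply: (vieta_root prod sum); rewrite inE eqxx.
- by apply: Srec_geom; apply: (vieta_root prod sum); rewrite !inE eqxx orbT.
Qed.

Lemma sparse_separating_Trec {a} : 2 < a -> sparse_separating (Trec a) 4.
Proof.
move=> a_gt2; have [|r1 [r2 [r12 prod sum]]] := @quadratic_real_roots a.
  by rewrite ger0_norm; lra.
have [r1_lt r2_gt r2_lt0] : [/\ r1 < -1, -1 < r2 & r2 < 0] by split; nra.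
have r1_lt0 : r1 < 0 by lra.
have Trec_root r : r \in [:: r1; r2] -> Trec a (geom r%:C%C).
  by move=> r_in; apply: Trec_geom; rewrite (vieta_root prod sum r_in) mulr0.
have norm12 : `|r1| != `|r2| by rewrite !ltr0_norm //; apply/eqP; lra.
have sep3 : sparse_separating (Trec a) 3.
  apply: (sparse_separating_geom2 (x := r1%:C%C) (y := r2%:C%C)); rewrite ?fmorph_eq0 ?ltr0_neq0 //.
  - by move=> p p_gt0; apply: real_complex_expn_neq.
  - by apply: Trec_root; rewrite inE eqxx.
  - by apply: Trec_root; rewrite !inE eqxx orbT.
apply: sparse_separating_geom3 sep3 r1_lt r2_gt r2_lt0 _ _ _.
- by apply: Trec_root; rewrite inE eqxx.
- by apply: Trec_geom; rewrite addNr mul0r.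
- by apply: Trec_root; rewrite !inE eqxx orbT.
Qed.

End Recurrences.

(** * Dimensions *)

Section Dimensions.
Context {R : rcfType} {m n : nat}.
Local Notation e := (ebasis R m n).

Definition border k : 'M[R[i]]_(m * n) :=
  (span_grid e 0 k 0 n + span_grid e k m (n - k) n)%MS.

Lemma mxrank_border k : (k <= n)%N -> (\rank (border k) <= k * n + (m - k) * k)%N.
Proof.
move=> k_le_n; apply: leq_trans (mxrank_adds_leqif _ _) _.
apply: leq_add; apply: leq_trans (mxrank_span_grid _ _ _ _ _) _; by rewrite ?subn0 ?subKn.
Qed.

Lemma ebasis_sub_adds_border k (U : 'M[R[i]]_(m * n)) :
  (forall p q, (k <= p < m)%N -> (q < n - k)%N ->
     exists2 X : 'M[R[i]]_(m, n), (mxvec (e p q + X) <= U)%MS &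
       forall (i : 'I_m) (j : 'I_n), (p <= i)%N -> X i j = 0) ->
  forall p q, (p < m)%N -> (q < n)%N -> (mxvec (e p q) <= U + border k)%MS.
Proof.
move=> lead p; elim/ltn_ind: p => p IHp q p_lt q_lt.
have [p_lt_k | k_le_p] := ltnP p k.
  apply: submx_trans (addsmxSr _ _); apply: submx_trans (addsmxSl _ _).
  by apply: span_grid_sup; lia.
have [q_lt_nk | q_ge_nk] := ltnP q (n - k); last first.
  apply: submx_trans (addsmxSr _ _); apply: submx_trans (addsmxSr _ _).
  by apply: span_grid_sup; lia.
have [|X eXU X_low] := lead p q _ q_lt_nk; first by rewrite k_le_p.
rewrite -[e p q](addrK X) linearB /=; apply: addmx_sub; first exact: submx_trans eXU (addsmxSl _ _).
rewrite eqmx_opp [X]matrix_sum_delta linear_sum; apply: summx_sub => i _.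
rewrite linear_sum; apply: summx_sub => j _; rewrite linearZ /=.
have [i_lt_p | p_le_i] := ltnP i p; last by rewrite X_low // scale0r sub0mx.
have -> : delta_mx i j = e i j by apply/matrixP => x y; rewrite !mxE.
exact/scalemx_sub/IHp.
Qed.

Lemma row_full_ebasis (U : 'M[R[i]]_(m * n)) :
  (forall p q, (p < m)%N -> (q < n)%N -> (mxvec (e p q) <= U)%MS) -> row_full U.
Proof.
move=> eU; rewrite -sub1mx; apply/row_subP => k; rewrite row1.
case: (mxvec_indexP k) => i j; rewrite -mxvec_delta.
have <- : e i j = delta_mx i j by apply/matrixP => x y; rewrite !mxE.
exact: eU.
Qed.

Lemma mxrank_eq_border k (U : 'M[R[i]]_(m * n)) :
  (k <= m)%N -> (k <= n)%N -> (\rank U <= (m - k) * (n - k))%N ->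
  (forall p q, (p < m)%N -> (q < n)%N -> (mxvec (e p q) <= U + border k)%MS) ->
  \rank U = ((m - k) * (n - k))%N.
Proof.
move=> k_le_m k_le_n U_le /row_full_ebasis/eqnP full; apply/eqP; rewrite eqn_leq U_le /=.
have := mxrank_adds_leqif U (border k); rewrite full => -[+ _].
have := mxrank_border k k_le_n; move: (\rank U) (\rank (border k)) => u b.
have -> : (m * n = (m - k) * (n - k) + (k * n + (m - k) * k))%N.
  by move: k_le_m k_le_n; clear; nia.
by lia.
Qed.

End Dimensions.

Section SpaceDimensions.
Context {R : rcfType} {m n : nat}.
Local Notation e := (ebasis R m n).

Lemma rank_Sspace (a : R) : (2 <= m)%N -> (2 <= n)%N ->
  \rank (Sspace m n a) = ((m - 2) * (n - 2))%N.
Proof.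
move=> m_ge2 n_ge2; apply: mxrank_eq_border => //.
  by rewrite SspaceE; apply: leq_trans (mxrank_span_grid _ _ _ _ _) _; rewrite -!subnDA.
apply: ebasis_sub_adds_border => p q /andP[p_ge2 p_lt] q_lt.
exists (e (p - 2) (q + 2) + a%:C%C *: e (p - 1) (q + 1)).
  rewrite SspaceE (_ : _ + _ = Sgen m n a (p - 1) (q + 1)); first by apply: span_grid_sup; lia.
  rewrite /Sgen.
  have -> : (p - 1 - 1 = p - 2)%N by lia.
  have -> : (q + 1 + 1 = q + 2)%N by lia.
  have -> : (p - 1 + 1 = p)%N by lia.
  have -> : (q + 1 - 1 = q)%N by lia.
  by apply/matrixP => x y; rewrite !mxE; ring.
move=> i j p_le_i; have ne k : (k < p)%N -> (i == k :> nat) = false.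
  by move=> k_lt; apply/negbTE/eqP; lia.
by rewrite !mxE !ne ?mulr0 ?addr0 //; lia.
Qed.

Lemma rank_Tspace (a : R) : (3 <= m)%N -> (3 <= n)%N ->
  \rank (Tspace m n a) = ((m - 3) * (n - 3))%N.
Proof.
move=> m_ge3 n_ge3; apply: mxrank_eq_border => //.
  by rewrite TspaceE; apply: leq_trans (mxrank_span_grid _ _ _ _ _) _; rewrite -!subnDA.
apply: ebasis_sub_adds_border => p q /andP[p_ge3 p_lt] q_lt.
exists (e (p - 3) (q + 3) + (a + 1)%:C%C *: e (p - 2) (q + 2) + (a + 1)%:C%C *: e (p - 1) (q + 1)).
  rewrite TspaceE (_ : _ + _ = Tgen m n a (p - 1) (q + 2)); first by apply: span_grid_sup; lia.
  rewrite /Tgen.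
  have -> : (p - 1 - 2 = p - 3)%N by lia.
  have -> : (q + 2 + 1 = q + 3)%N by lia.
  have -> : (p - 1 - 1 = p - 2)%N by lia.
  have -> : (q + 2 - 1 = q + 1)%N by lia.
  have -> : (p - 1 + 1 = p)%N by lia.
  have -> : (q + 2 - 2 = q)%N by lia.
  by apply/matrixP => x y; rewrite !mxE; ring.
move=> i j p_le_i; have ne k : (k < p)%N -> (i == k :> nat) = false.
  by move=> k_lt; apply/negbTE/eqP; lia.
by rewrite !mxE !ne ?mulr0 ?addr0 //; lia.
Qed.

End SpaceDimensions.

(** * Schmidt ranks *)

Section SchmidtRank.
Context {R : rcfType} {m n : nat}.
Local Notation e := (ebasis R m n).

Lemma Sspace_rank_gt2 {a : R} {v} : 2 <= `|a| ->
  in_space v (Sspace m n a) -> v != 0 -> (2 < \rank v)%N.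
Proof.
move=> a_ge2 vS v_neq0; apply: (mxrank_ge_sparse_separating (sparse_separating_Srec a_ge2) v_neq0).
by move=> d w Sw; apply: Sspace_antidiag_orth Sw vS.
Qed.

Lemma Tspace_rank_gt3 {a : R} {v} : 2 < a ->
  in_space v (Tspace m n a) -> v != 0 -> (3 < \rank v)%N.
Proof.
move=> a_gt2 vT v_neq0; apply: (mxrank_ge_sparse_separating (sparse_separating_Trec a_gt2) v_neq0).
by move=> d w Tw; apply: Tspace_antidiag_orth Tw vT.
Qed.

Lemma mxrank_ebasis p q : (p < m)%N -> (q < n)%N -> \rank (e p q) = 1%N.
Proof. by move=> p_lt q_lt; rewrite (ebasis_delta p_lt q_lt) mxrank_delta. Qed.

Lemma rank_Sgen11 (a : R) : (2 < m)%N -> (2 < n)%N -> (\rank (Sgen m n a 1 1) <= 3)%N.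
Proof.
move=> m_gt2 n_gt2; have e_le1 p q : (p < m)%N -> (q < n)%N -> (\rank (e p q) <= 1)%N.
  by move=> p_lt q_lt; rewrite mxrank_ebasis.
rewrite /Sgen -[3%N]/(1 + 1 + 1)%N.
apply: leq_trans (mxrank_add _ _) (leq_add _ (e_le1 _ _ _ _)); try lia.
apply: leq_trans (mxrank_add _ _) (leq_add (e_le1 _ _ _ _) _); try lia.
by apply: leq_trans (mxrankS (scalemx_sub _ (submx_refl _))) (e_le1 _ _ _ _); lia.
Qed.

Lemma mxdot_Sgen11 (a : R) : (2 < m)%N -> (2 < n)%N ->
  mxdot (Sgen m n a 1 1) (antidiag_mx 2 (fun i => (i == 1)%N%:R)) = a%:C%C.
Proof.
by move=> m_gt2 n_gt2; rewrite mxdot_Sgen_antidiag //= ?mulr1 ?add0r ?addr0 ?mul1r //; lia.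
Qed.

Lemma Sgen11_witness (a : R) : 2 <= `|a| -> (2 < m)%N -> (2 < n)%N ->
  [/\ in_space (Sgen m n a 1 1) (Sspace m n a), ~~ in_space (Sgen m n a 1 1) (Tspace m n a)
    & schmidt_rank (Sgen m n a 1 1) = 3%N].
Proof.
move=> a_ge2 m_gt2 n_gt2; have aC_neq0 : a%:C%C != 0.
  by rewrite fmorph_eq0 -normr_eq0; apply/eqP; lra.
have vS : in_space (Sgen m n a 1 1) (Sspace m n a).
  by rewrite /in_space SspaceE span_grid_sup //; lia.
split=> //.
  (* T lives on the antidiagonals i + j >= 3, while Sgen 1 1 has the entry a at (1, 1). *)
  apply/negP => vT; have := Tspace_antidiag_lt3 (w := fun i => (i == 1)%N%:R) (ltnSn 2) vT.
  by rewrite mxdot_Sgen11 //; apply/eqP.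
apply/eqP; rewrite eqn_leq rank_Sgen11 // (Sspace_rank_gt2 a_ge2 vS) //.
apply: contra aC_neq0 => /eqP v0.
by rewrite -(mxdot_Sgen11 a m_gt2 n_gt2) v0 -(scale0r 0) mxdotZl mul0r.
Qed.

End SchmidtRank.

Theorem theorem5p8 (R : realType) (m n : nat) (a : R) :
  (4 <= minn m n)%N ->
  [/\ (Tspace m n a <= Sspace m n a)%MS,
      (2 <= `|a| ->
         (forall v : 'M[R[i]]_(m, n), in_space v (Sspace m n a) -> v != 0 ->
            (2 < schmidt_rank v)%N)
         /\ dimsp (Sspace m n a) = ((m - 2) * (n - 2))%N),
      (4 < a ->
         (forall v : 'M[R[i]]_(m, n), in_space v (Tspace m n a) -> v != 0 ->
            (3 < schmidt_rank v)%N)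
         /\ dimsp (Tspace m n a) = ((m - 3) * (n - 3))%N)
    & (4 < a ->
         exists v : 'M[R[i]]_(m, n),
           [/\ in_space v (Sspace m n a), ~~ in_space v (Tspace m n a)
             & schmidt_rank v = 3%N])].
Proof.
rewrite leq_min => /andP[m_ge4 n_ge4]; split.
- exact: Tspace_sub_Sspace.
- move=> a_ge2; split; first by move=> v; apply: Sspace_rank_gt2.
  by apply: rank_Sspace; lia.
- move=> a_gt4; split; first by move=> v; apply: Tspace_rank_gt3; lra.
  by apply: rank_Tspace; lia.
- move=> a_gt4; have a_ge2 : 2 <= `|a| by rewrite ger0_norm; lra.
  by exists (Sgen m n a 1 1); apply: Sgen11_witness a_ge2 _ _; lia.
Qed.
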